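(* Let $X$ be a space such that $\mathcal{N}_\Delta^{X^2}$ has calibre $(\omega_1,\omega)$. If $X$ is countably compact then $X$ is compact (and metrizable).
   Context: All spaces are Tychonoff. $\mathcal{N}_\Delta^{X^2}$ is the family of open neighborhoods of the diagonal $\Delta$ in $X^2$, ordered by reverse inclusion. A directed set has calibre $(\omega_1,\omega)$ if every uncountable subset contains an infinite subset with an upper bound. *)

From HB Require Import structures.
From mathcomp Require Import all_boot all_order all_algebra.
From mathcomp Require Import all_classical all_reals all_analysis.
Set Implicit Arguments. Unset Strict Implicit. Unset Printing Implicit Defensive.
Import Order.TTheory GRing.Theory Num.Theory.
Local Open Scope classical_set_scope.
Local Open Scope ring_scope.

Definition tychonoff_space (X : topologicalType) : Prop :=
  completely_regular_space X /\ hausdorff_space X.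

Definition calibre_w1_w (T : Type) (D : set T) (le : T -> T -> Prop) : Prop :=
  forall S : set T, S `<=` D -> ~ countable S ->
    exists S' : set T, [/\ S' `<=` S, infinite_set S' &
      exists u, D u /\ (forall s, S' s -> le s u)].

Definition diagonal (X : Type) : set (X * X) := [set xy | xy.1 = xy.2].

Definition diag_nbhds (X : topologicalType) : set (set (X * X)) :=
  [set U | open U /\ @diagonal X `<=` U].

Definition rev_incl (X : Type) (U V : set X) : Prop := V `<=` U.

(** Countably compact: every countable open cover has a finite subcover
    (countable covers enumerated by nat, repetitions allowed). *)
Definition countably_compact (X : topologicalType) : Prop :=
  forall F : nat -> set X, (forall n, open (F n)) ->
    setT `<=` \bigcup_n F n ->
    exists N : nat, setT `<=` \bigcup_(n in `I_N) F n.

Definition metrizable (R : realType) (X : topologicalType) : Prop :=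
  exists d : X -> X -> R,
    [/\ (forall x y, 0 <= d x y),
        (forall x y, d x y = 0 <-> x = y),
        (forall x y, d x y = d y x),
        (forall x y z, d x z <= d x y + d y z) &
        (forall A : set X, open A <->
           (forall x, A x -> exists2 e : R, 0 < e & [set y | d x y < e] `<=` A))].

From mathcomp Require Import all_boot all_order all_algebra.
From mathcomp Require Import all_classical all_reals all_analysis.
From mathcomp Require Import lra.
Set Implicit Arguments. Unset Strict Implicit. Unset Printing Implicit Defensive.
Import Order.TTheory GRing.Theory Num.Theory.
Import numFieldTopology.Exports.
Local Open Scope classical_set_scope.
Local Open Scope ring_scope.

(* Give each point p of a family S ⊆ X × X an open box U p × V p around it,
   and put N p := ((X ∖ {p.1}) × X ∪ X × U p) ∩ ((X ∖ {p.2}) × X ∪ X × V p),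
   an open neighbourhood of the diagonal.  If S is uncountable, calibre
   (ω₁, ω) yields an infinite J ⊆ S and one W ∈ N_Δ contained in every N p,
   p ∈ J.  If J accumulates at some z, two distinct p, q ∈ J near z have
   (p.1, q.1), (p.2, q.2) ∈ W, so each lies in the other's box.  Hence a
   maximal set of points no two of which lie in each other's boxes is
   countable, and its boxes cover S.  On the diagonal of a countably compact
   X this makes X Lindelöf, hence compact.  Off the diagonal of the compact
   X, with boxes cut out by Urysohn functions, it gives countably many
   continuous g_n : X → [0, 1] separating points, and
   sup_n |g_n x − g_n y| / (n + 1) is then a metric for X. *)

(** * Cluster points of sequences *)

Lemma cluster_seqP (T : topologicalType) (s : nat -> T) (z : T) :
  cluster (s @ \oo) z <->
  forall B, nbhs z B -> forall N, exists2 k, (N <= k)%N & B (s k).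
Proof.
split=> [zc B zB N | zc A B [N _ NA] zB].
  have : (s @ \oo) (s @` [set k | (N <= k)%N]) by exists N => // k Nk; exists k.
  by move=> /zc /(_ zB) [_ [[k Nk <-] Bsk]]; exists k.
by have [k Nk Bsk] := zc B zB N; exists (s k); split => //; apply: NA.
Qed.

Lemma cluster_image (T U : topologicalType) (f : T -> U) (F : set_system T) z :
  {for z, continuous f} -> cluster F z -> cluster (f @ F) (f z).
Proof.
move=> fc zc A B FA fzB.
by have [x [Ax Bx]] := zc _ _ FA (fc _ fzB); exists (f x).
Qed.

Lemma countably_compact_cluster (T : topologicalType) :
  countably_compact T -> forall s : nat -> T, exists z, cluster (s @ \oo) z.
Proof.
move=> cc s; apply: contrapT => /forallNP ncl.
pose G N :=
  \bigcup_(O in [set O | open O /\ forall k, (N <= k)%N -> ~ O (s k)]) O.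
have oG N : open (G N) by apply: bigcup_open => O [].
have cG : [set: T] `<=` \bigcup_n G n.
  move=> z _; move: (ncl z); rewrite cluster_seqP.
  move=> /existsNP [B] /not_implyP [zB] /existsNP [N] nB.
  move: zB; rewrite nbhsE => -[ O [oO Oz] OB].
  exists N => //; exists O => //; split => // k Nk /OB Bk.
  by apply: nB; exists k.
have [M covM] := cc G oG cG.
have [n /= nM [ O [_ nO] Osm]] := covM (s M) I.
exact: nO (ltnW nM) Osm.
Qed.

Lemma infinite_set_injseq (T : Type) (J : set T) : infinite_set J ->
  exists2 s : nat -> T, injective s & forall n, J (s n).
Proof.
move=> /infiniteP /card_leP [f].
exists (fun n => val (f (SigSub (mem_set (I : [set: nat] n))))).
  move=> m n /val_inj /(@inj _ _ _ f).
  by move=> /(_ (mem_set I) (mem_set I)) /(congr1 val).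
by move=> n; exact: set_valP.
Qed.

Definition accumulation_point (T : topologicalType) (J : set T) (z : T) :=
  forall B, nbhs z B -> exists p q, [/\ J p, J q, p <> q, B p & B q].

Lemma injseq_cluster_accumulation (T : topologicalType) (J : set T)
    (s : nat -> T) (z : T) :
  injective s -> (forall n, J (s n)) -> cluster (s @ \oo) z ->
  accumulation_point J z.
Proof.
move=> sinj Js /cluster_seqP zc B zB.
have [k0 _ Bk0] := zc B zB 0%N.
have [k1 k01 Bk1] := zc B zB k0.+1.
exists (s k0), (s k1); split => // /sinj k10.
by rewrite k10 ltnn in k01.
Qed.

Lemma compact_accumulation (T : topologicalType) (J : set T) :
  compact [set: T] -> infinite_set J -> exists z, accumulation_point J z.
Proof.
move=> cT /infinite_set_injseq [s sinj Js].
have [z [_ zc]] := cT (s @ \oo) _ filterT.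
by exists z; apply: injseq_cluster_accumulation zc.
Qed.

Lemma countably_compact_diagonal_accumulation (X : topologicalType)
    (J : set (X * X)) :
  countably_compact X -> J `<=` @diagonal X -> infinite_set J ->
  exists z, accumulation_point J z.
Proof.
move=> cc JD /infinite_set_injseq [s sinj Js].
have [z zc] := countably_compact_cluster cc (fst \o s).
have diag_cont : continuous (fun x : X => (x, x)) by move=> x; apply: cvg_pair.
have sE : s = (fun x => (x, x)) \o (fst \o s).
  apply/funext => n /=; have := JD _ (Js n).
  by case: (s n) => a b; rewrite /diagonal /= => ->.
exists (z, z); apply: injseq_cluster_accumulation sinj Js _.
by rewrite sE; exact: (cluster_image (diag_cont z) zc).
Qed.

(** * Calibre (omega_1, omega) and neighbourhoods of the diagonal *)

Lemma calibre_w1_w_family (T I : Type) (D : set T) (le : T -> T -> Prop)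
    (S : set I) (N : I -> T) :
  calibre_w1_w D le -> (forall i, S i -> D (N i)) ->
  (forall i, S i -> le (N i) (N i)) -> ~ countable S ->
  exists J, [/\ J `<=` S, infinite_set J &
    exists2 u, D u & forall i, J i -> le (N i) u].
Proof.
move=> cal DN leNN nS.
have [cN|ncN] := pselect (countable (N @` S)).
  (* some fibre of N is uncountable, and N is constant on it *)
  have [_ [i Si <-] nfib] :
      exists2 d, (N @` S) d & ~ countable (S `&` N @^-1` [set d]).
    apply: contrapT => /forallPNP fib; apply: nS.
    apply: (@sub_countable _ _ _
      (\bigcup_(d in N @` S) (S `&` N @^-1` [set d]))).
      by apply: subset_card_le => i Si; exists (N i) => //; exists i.
    by apply: bigcup_countable => // d Sd; apply: contrapT; exact: fib.
  exists (S `&` N @^-1` [set N i]); split.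
  - by move=> ? [].
  - by move=> /finite_set_countable.
  - by exists (N i); [exact: DN | move=> j [_ ->]; exact: leNN].
have NSD : N @` S `<=` D by move=> _ [i Si <-]; exact: DN.
have [S' [S'N iS' [u [Du S'u]]]] := cal _ NSD ncN.
exists (S `&` N @^-1` S'); split.
- by move=> ? [].
- move=> fin; apply: iS'; apply: sub_finite_set (finite_image N fin).
  by move=> d /[dup] /S'N [i Si <-] S'i; exists i.
- by exists u => // i [_ S'i]; exact: S'u.
Qed.

Lemma open_setX (X Y : topologicalType) (A : set X) (B : set Y) :
  open A -> open B -> open (A `*` B).
Proof.
move=> oA oB; rewrite openE => -[a b] [/= Aa Bb].
by exists (A, B) => //; split; apply: open_nbhs_nbhs.
Qed.

Definition fibre_nbhd (X : Type) (x : X) (U : set X) : set (X * X) :=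
  (~` [set x]) `*` setT `|` setT `*` U.

Lemma diag_nbhds_fibre_nbhd (X : topologicalType) (x : X) (U : set X) :
  accessible_space X -> open U -> U x -> diag_nbhds (fibre_nbhd x U).
Proof.
move=> aX oU Ux; split.
  have ox : open (~` [set x]) by exact/closed_openC/accessible_closed_set1.
  by apply: openU; apply: open_setX => //; exact: openT.
move=> [a b] ab; have {ab} <- : a = b := ab.
by have [->|ax] := pselect (a = x); [right | left].
Qed.

Lemma fibre_nbhdP (X : Type) (x y : X) (U : set X) :
  fibre_nbhd x U (x, y) -> U y.
Proof. by case=> [[/(_ erefl)] | [_]]. Qed.

Lemma diag_nbhds_square (X : topologicalType) (W : set (X * X)) (x : X) :
  diag_nbhds W -> exists2 C, nbhs x C & C `*` C `<=` W.
Proof.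
move=> [oW dW].
have [[P Q] /= [Px Qx] PQW] : nbhs (x, x) W.
  by apply: open_nbhs_nbhs; split => //; exact: dW.
exists (P `&` Q); first exact: filterI.
by move=> [a b] [[Pa _] [_ Qb]]; apply: PQW.
Qed.

Lemma calibre_mutual_boxes (X : topologicalType) (S : set (X * X))
    (U V : X * X -> set X) :
  accessible_space X -> calibre_w1_w (@diag_nbhds X) (@rev_incl (X * X)) ->
  (forall J, J `<=` S -> infinite_set J -> exists z, accumulation_point J z) ->
  (forall p, S p -> [/\ open (U p), open (V p), U p p.1 & V p p.2]) ->
  ~ countable S ->
  exists p q, [/\ S p, S q, p <> q, (U p `*` V p) q & (U q `*` V q) p].
Proof.
move=> aX cal acc UV nS.
pose N p := fibre_nbhd p.1 (U p) `&` fibre_nbhd p.2 (V p).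
have DN p : S p -> diag_nbhds (N p).
  move=> /UV [oU oV Up Vp].
  have [oNU dNU] := diag_nbhds_fibre_nbhd aX oU Up.
  have [oNV dNV] := diag_nbhds_fibre_nbhd aX oV Vp.
  by split; [exact: openI | move=> w dw; split; [exact: dNU | exact: dNV]].
have [J [JS iJ [W DW WN]]] :=
  calibre_w1_w_family cal DN (fun p _ => @subset_refl _ (N p)) nS.
have [z zJ] := acc J JS iJ.
have [C1 zC1 C1W] := diag_nbhds_square z.1 DW.
have [C2 zC2 C2W] := diag_nbhds_square z.2 DW.
have zC : nbhs z (C1 `*` C2) by exists (C1, C2).
have [p [q [Jp Jq pq Cp Cq]]] := zJ _ zC.
(* (a.1, b.1) ∈ C1 × C1 ⊆ W ⊆ N a, and the fibre of N a over a.1 is U a. *)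
have box a b : J a -> (C1 `*` C2) a -> (C1 `*` C2) b -> (U a `*` V a) b.
  move=> Ja [C1a C2a] [C1b C2b]; split.
  - have [+ _] := WN a Ja (a.1, b.1) (C1W (a.1, b.1) (conj C1a C1b)).
    exact: fibre_nbhdP.
  - have [_ +] := WN a Ja (a.2, b.2) (C2W (a.2, b.2) (conj C2a C2b)).
    exact: fibre_nbhdP.
by exists p, q; split; [exact: JS | exact: JS | | exact: box | exact: box].
Qed.

Lemma mutual_pairs_countable_cover (T : Type) (Y : set T) (B : T -> set T) :
  (forall p, Y p -> B p p) ->
  (forall S, S `<=` Y -> ~ countable S ->
     exists p q, [/\ S p, S q, p <> q, B p q & B q p]) ->
  exists A, [/\ A `<=` Y, countable A & Y `<=` \bigcup_(a in A) B a].
Proof.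
move=> Bpp mutual.
pose discrete A := A `<=` Y /\
  forall p q, A p -> A q -> B p q -> B q p -> p = q.
have [A [[AY Adis] Amax]] :
    exists A, discrete A /\ forall A', A `<` A' -> ~ discrete A'.
  apply: Zorn_bigcup => F Fdis Ftot; split.
    by move=> x [A FA Ax]; have [+ _] := Fdis A FA; apply.
  move=> p q [A1 FA1 A1p] [A2 FA2 A2q].
  have [A12|A21] := Ftot A1 A2 FA1 FA2.
  - by have [_ +] := Fdis A2 FA2; apply => //; exact: A12.
  - by have [_ +] := Fdis A1 FA1; apply => //; exact: A21.
exists A; split => //.
  apply: contrapT => /(mutual A AY) [p [q [Ap Aq pq Bpq Bqp]]].
  by apply: pq; exact: Adis.
move=> q Yq; apply: contrapT => qA.
have nAq : ~ A q by move=> Aq; apply: qA; exists q => //; exact: Bpp.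
apply: (Amax (A `|` [set q])).
  by split => [x Ax|]; [left | move=> /(_ q (or_intror erefl))].
split; first by move=> x [/AY|->].
move=> x y [Ax|->] [Ay|->] // Bxy Byx; first exact: Adis.
- by exfalso; apply: qA; exists x.
- by exfalso; apply: qA; exists y.
Qed.

Lemma calibre_countable_box_cover (X : topologicalType) (Y : set (X * X))
    (U V : X * X -> set X) :
  accessible_space X -> calibre_w1_w (@diag_nbhds X) (@rev_incl (X * X)) ->
  (forall J, J `<=` Y -> infinite_set J -> exists z, accumulation_point J z) ->
  (forall p, Y p -> [/\ open (U p), open (V p), U p p.1 & V p p.2]) ->
  exists A, [/\ A `<=` Y, countable A & Y `<=` \bigcup_(a in A) (U a `*` V a)].
Proof.
move=> aX cal acc UV; apply: mutual_pairs_countable_cover => [p /UV [] //|S SY].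
apply: calibre_mutual_boxes aX cal _ _.
- by move=> J JS; apply: acc; exact: subset_trans JS SY.
- by move=> p /SY /UV.
Qed.

(** * Compactness *)

Lemma countably_compact_lindelof_compact (X : topologicalType) :
  countably_compact X ->
  (forall O : X -> set X, (forall x, open (O x) /\ O x x) ->
     exists2 A : set X, countable A & [set: X] `<=` \bigcup_(a in A) O a) ->
  compact [set: X].
Proof.
move=> cc lind F PF _; apply: contrapT => ncl.
have sep z : exists OA : set X * set X,
    [/\ open OA.1, OA.1 z, F OA.2 & OA.1 `&` OA.2 = set0].
  have : ~ (F `#` nbhs z) by move=> Fz; apply: ncl; exists z.
  move=> /existsNP [A] /existsNP [B] /not_implyP [FA] /not_implyP [zB] nAB.
  move: zB; rewrite nbhsE => -[ O [oO Oz] OB].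
  exists (O, A); split => //=; apply/seteqP; split => // y [Oy Ay].
  by apply: nAB; exists y; split => //; exact: OB.
have [OA OAsep] := choice sep.
have [A cA cov] : exists2 A : set X, countable A &
    [set: X] `<=` \bigcup_(a in A) (OA a).1.
  by apply: lind => x; have [] := OAsep x.
have [e cov_e] : exists e : nat -> X, [set: X] `<=` \bigcup_n (OA (e n)).1.
  have [A0|[e]] := pfcard_geP cA.
    have [x0 _] := filter_ex (filterT : F setT).
    by have [a] := cov x0 I; rewrite A0.
  exists e => x _; have [a Aa Oax] := cov x I.
  by have [n _ en] := @surj _ _ _ _ e a Aa; exists n; rewrite // en.
have oO n : open (OA (e n)).1 by have [] := OAsep (e n).
have [M covM] := cc _ oO cov_e.
have FI : F [set y | forall i : 'I_M, (OA (e i)).2 y].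
  by apply: filter_forall => i; have [] := OAsep (e i).
have [y Iy] := filter_ex FI.
have [n /= nM Oy] := covM y I.
suff : ((OA (e n)).1 `&` (OA (e n)).2) y by have [_ _ _ ->] := OAsep (e n).
by split => //; exact: Iy (Ordinal nM).
Qed.

Lemma calibre_countably_compact_lindelof (X : topologicalType) :
  accessible_space X -> calibre_w1_w (@diag_nbhds X) (@rev_incl (X * X)) ->
  countably_compact X ->
  forall O : X -> set X, (forall x, open (O x) /\ O x x) ->
  exists2 A : set X, countable A & [set: X] `<=` \bigcup_(a in A) O a.
Proof.
move=> aX cal cc O oO.
have [||A' [_ cA' cov]] :=
  @calibre_countable_box_cover X (@diagonal X) (O \o fst) (O \o fst) aX cal.
- by move=> J JD; exact: countably_compact_diagonal_accumulation.
- move=> [a b] ab; have {ab} <- : a = b := ab.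
  by have [] := oO a.
exists (fst @` A'); first exact: sub_countable (card_image_le _ _) cA'.
move=> x _; have [a A'a [Oax _]] := cov (x, x) erefl.
by exists a.1 => //; exists a.
Qed.

(** * Metrizability *)

Lemma Urysohn_points (R : realType) (X : topologicalType) (x y : X) :
  completely_regular_space X -> accessible_space X -> x <> y ->
  Urysohn [set x] [set y] x = 0 :> R /\ Urysohn [set x] [set y] y = 1 :> R.
Proof.
move=> crX aX xy; have us : uniform_separator [set x] [set y].
  by apply: crX => [|/= yx]; [exact: accessible_closed_set1 | exact: xy].
by split; [apply: (Urysohn_sub0 us) | apply: (Urysohn_sub1 us)]; eexists.
Qed.

Lemma calibre_compact_separating_seq (R : realType) (X : topologicalType) :
  completely_regular_space X -> accessible_space X ->
  calibre_w1_w (@diag_nbhds X) (@rev_incl (X * X)) -> compact [set: X] ->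
  exists g : nat -> X -> R, [/\ forall n, continuous (g n),
    forall n x, 0 <= g n x <= 1 &
    forall x y, x <> y -> exists n, g n x != g n y].
Proof.
move=> crX aX cal cX.
pose f (p : X * X) : X -> R := Urysohn [set p.1] [set p.2].
have f01 p z : 0 <= f p z <= 1.
  have := @Urysohn_range X R _ _ (f p z) (ex_intro2 _ _ z I erefl).
  by rewrite /= in_itv.
pose U p := f p @^-1` [set r | r < 1/3].
pose V p := f p @^-1` [set r | 2/3 < r].
have [||A [_ cA cov]] :=
  @calibre_countable_box_cover X [set p | p.1 <> p.2] U V aX cal.
- move=> J _; apply: compact_accumulation.
  by rewrite -setXTT; apply: compact_setX.
- move=> p p12; have [fp1 fp2] := Urysohn_points R crX aX p12.
  have oU : open (U p).
    by apply: open_comp => [z _|]; [exact: Urysohn_continuous | exact: open_lt].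
  have oV : open (V p).
    by apply: open_comp => [z _|]; [exact: Urysohn_continuous | exact: open_gt].
  by split; rewrite // /U /V /f /= ?fp1 ?fp2; lra.
have sep a x y : (U a `*` V a) (x, y) -> f a x != f a y.
  by move=> [Ux Vy]; apply/eqP => E; move: Ux Vy; rewrite /U /V /= E; lra.
have [A0|[e]] := pfcard_geP cA.
  exists (fun _ _ => 0); split => [n|n x|x y xy]; first exact: cst_continuous.
    by rewrite lexx ler01.
  by have [a] := cov (x, y) xy; rewrite A0.
exists (fun n => f (e n)); split => // [n|x y xy].
  exact: Urysohn_continuous.
have [a Aa axy] := cov (x, y) xy.
by have [n _ en] := @surj _ _ _ _ e a Aa; exists n; rewrite en; exact: sep.
Qed.

Section sup_metric.
Variables (R : realType) (X : topologicalType) (g : nat -> X -> R).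
Hypothesis g01 : forall n x, 0 <= g n x <= 1.

Definition scaled_dist n x y := `|g n x - g n y| / n.+1%:R.

Definition sup_dist x y := sup (range (fun n => scaled_dist n x y)).

Lemma scaled_dist_ge0 n x y : 0 <= scaled_dist n x y.
Proof. by rewrite /scaled_dist divr_ge0. Qed.

Lemma scaled_dist_le_norm n x y : scaled_dist n x y <= `|g n x - g n y|.
Proof. by rewrite /scaled_dist ler_piMr // invf_le1 ?ltr0n // ler1n. Qed.

Lemma scaled_dist_le_inv n x y : scaled_dist n x y <= n.+1%:R^-1.
Proof.
rewrite /scaled_dist ler_piMl ?invr_ge0 //.
have := @g01 n x; have := @g01 n y => /andP[? ?] /andP[? ?].
by rewrite ler_norml; apply/andP; split; lra.
Qed.

Lemma scaled_dist_le_sup n x y : scaled_dist n x y <= sup_dist x y.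
Proof.
apply: ub_le_sup; last by exists n.
exists 1 => _ [k _ <-]; apply: le_trans (scaled_dist_le_inv k x y) _.
by rewrite invf_le1 ?ltr0n // ler1n.
Qed.

Lemma sup_dist_le x y c :
  (forall n, scaled_dist n x y <= c) -> sup_dist x y <= c.
Proof.
move=> le_c; apply: ge_sup => [|_ [n _ <-]] //.
by exists (scaled_dist 0 x y), 0%N.
Qed.

Lemma sup_dist_ge0 x y : 0 <= sup_dist x y.
Proof. exact: le_trans (scaled_dist_ge0 0 x y) (scaled_dist_le_sup 0 x y). Qed.

Lemma sup_distxx x : sup_dist x x = 0.
Proof.
apply/le_anti; rewrite sup_dist_ge0 andbT.
by apply: sup_dist_le => n; rewrite /scaled_dist subrr normr0 mul0r.
Qed.

Lemma sup_distC x y : sup_dist x y = sup_dist y x.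
Proof.
congr sup; apply/seteqP; split => _ [n _ <-]; exists n => //.
  by rewrite /scaled_dist distrC.
by rewrite /scaled_dist distrC.
Qed.

Lemma sup_dist_triangle x y z : sup_dist x z <= sup_dist x y + sup_dist y z.
Proof.
apply: sup_dist_le => n.
apply: le_trans (lerD (scaled_dist_le_sup n x y) (scaled_dist_le_sup n y z)).
by rewrite /scaled_dist -mulrDl ler_wpM2r ?invr_ge0 // ler_distD.
Qed.

Hypothesis gc : forall n, continuous (g n).
Hypothesis gsep : forall x y, x <> y -> exists n, g n x != g n y.

Lemma sup_dist_eq0 x y : sup_dist x y = 0 <-> x = y.
Proof.
split=> [d0|->]; last exact: sup_distxx.
apply: contrapT => /gsep [n gxy].
have : 0 < scaled_dist n x y.
  by rewrite /scaled_dist divr_gt0 // normr_gt0 subr_eq0.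
by rewrite ltNge -d0 scaled_dist_le_sup.
Qed.

Lemma nbhs_sup_dist_lt x e : 0 < e -> nbhs x [set y | sup_dist x y < e].
Proof.
move=> e0; have e20 : 0 < e / 2 by rewrite divr_gt0.
have [N _ small_tail] := near_infty_natSinv_lt (PosNum e20).
have : \forall y \near x, forall i : 'I_N, `|g i x - g i y| < e / 2.
  by apply: filter_forall => i; exact: cvgr_dist_lt (@gc i x) _ e20.
apply: filterS => y near_y /=.
apply: (@le_lt_trans _ _ (e / 2)).
  2: by rewrite ltr_pdivrMr // ltr_pMr // ltr1n.
apply: sup_dist_le => k; apply: ltW.
have [kN|Nk] := ltnP k N.
  exact: le_lt_trans (scaled_dist_le_norm k x y) (near_y (Ordinal kN)).
exact: le_lt_trans (scaled_dist_le_inv k x y) (small_tail k Nk).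
Qed.

Lemma sup_dist_bounded_away x z : z <> x ->
  exists2 e, 0 < e & \forall w \near z, e <= sup_dist x w.
Proof.
move=> /gsep [n gzx]; set del := `|g n z - g n x|.
have del0 : 0 < del by rewrite normr_gt0 subr_eq0.
have del20 : 0 < del / 2 by rewrite divr_gt0.
exists (del / 2 / n.+1%:R); first by rewrite divr_gt0.
have : \forall w \near z, `|g n z - g n w| < del / 2.
  exact: cvgr_dist_lt (@gc n z) _ del20.
apply: filterS => w near_w.
apply: le_trans (scaled_dist_le_sup n x w).
rewrite /scaled_dist ler_wpM2r ?invr_ge0 // distrC.
have := ler_distD (g n w) (g n z) (g n x); rewrite -/del; lra.
Qed.

Lemma open_sup_dist_ball (A : set X) x : compact [set: X] -> open A -> A x ->
  exists2 e, 0 < e & [set y | sup_dist x y < e] `<=` A.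
Proof.
(* Points y_k outside A with sup_dist x y_k < 1/(k+1) would cluster at some
   z outside A, but sup_dist x is bounded away from 0 near z. *)
move=> cX oA Ax; apply: contrapT => no_ball.
have far k : exists y, sup_dist x y < k.+1%:R^-1 /\ ~ A y.
  apply: contrapT => /forallNP close_in_A; apply: no_ball.
  exists k.+1%:R^-1 => [|y /= dy]; first by rewrite invr_gt0.
  by apply: contrapT => nAy; exact: close_in_A y (conj dy nAy).
have [ys farys] := choice far.
have [z [_ /cluster_seqP zc]] := cX (ys @ \oo) _ filterT.
have nAz : ~ A z.
  move=> Az; have [k _ Ak] := zc A (open_nbhs_nbhs (conj oA Az)) 0%N.
  by have [_] := farys k.
have [|e e0 near_e] := @sup_dist_bounded_away x z.
  by move=> zx; apply: nAz; rewrite zx.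
have [N _ small_tail] := near_infty_natSinv_lt (PosNum e0).
have [k Nk ek] := zc _ near_e N.
have [dk _] := farys k.
by have := lt_le_trans (lt_trans dk (small_tail k Nk)) ek; rewrite ltxx.
Qed.

Lemma compact_separating_seq_metrizable : compact [set: X] -> metrizable R X.
Proof.
move=> cX; exists sup_dist; split.
- exact: sup_dist_ge0.
- exact: sup_dist_eq0.
- exact: sup_distC.
- exact: sup_dist_triangle.
move=> A; split => [oA x Ax|balls]; first exact: open_sup_dist_ball.
rewrite openE => x /balls [e e0 eA].
exact: filterS eA (nbhs_sup_dist_lt x e0).
Qed.

End sup_metric.

Theorem mainTheorem12 (R : realType) (X : topologicalType) :
  tychonoff_space X ->
  calibre_w1_w (@diag_nbhds X) (@rev_incl (X * X)) ->
  countably_compact X ->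
  compact [set: X] /\ metrizable R X.
Proof.
move=> [crX hX] cal cc.
have aX := hausdorff_accessible hX.
have cX : compact [set: X].
  exact: countably_compact_lindelof_compact cc
    (calibre_countably_compact_lindelof aX cal cc).
split => //.
have [g [gc g01 gsep]] := @calibre_compact_separating_seq R X crX aX cal cX.
exact: compact_separating_seq_metrizable g01 gc gsep cX.
Qed.
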